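(* Consider the Markov chain $\mathcal{G}$ described in the context, with parameters $r\ge1$, $p_c,p_1,\ldots,p_r\in[0,1]$. Assume $p_c<1$ and $p_c\cdot r\cdot\max\{p_1,\ldots,p_r\}<1$. Then for every block $\alpha\in\{1,\ldots,r\}^*$, $$\mathbb{E}[O(s_1^\alpha)]=\frac{\sum_{i=1}^r p_i}{1-p_c\sum_{i=1}^r p_i}\qquad\text{and}\qquad \mathbb{E}[N(s_1^\alpha)]=\frac{r+\sum_{i=1}^r p_i}{1-p_c\sum_{i=1}^r p_i}.$$
   Context: Fix an integer $r\ge 1$ and probabilities $p_c,p_1,\ldots,p_r\in[0,1]$. Words $\alpha\in\{1,\ldots,r\}^*$ (finite sequences, $\varepsilon$ the empty word, $\alpha\cdot i$ concatenation, $r^k$ the word of $k$ letters $r$) are called blocks. The Markov chain $\mathcal{G}$ has the countable state space $\{s_i^\alpha, c_i^\alpha : 1\le i\le r,\ \alpha\in\{1,\ldots,r\}^*\}\cup\{\sharp,\bot\}$, initial state $\sharp$, and the following transition probabilities (all unlisted transitions have probability $0$): $p(\sharp,s_1^\varepsilon)=p_c$, $p(\sharp,\bot)=1-p_c$; $p(s_i^\alpha,c_i^\alpha)=p_i$ for $1\le i\le r$; $p(s_i^\alpha,s_{i+1}^\alpha)=1-p_i$ for $1\le i<r$; $p(c_i^\alpha,s_1^{\alpha\cdot i})=p_c$ for $1\le i\le r$; $p(c_i^\alpha,s_{i+1}^\alpha)=1-p_c$ for $1\le i<r$; for every word of the form $\gamma=\beta\cdot i\cdot r^k$ with $1\le i<r$,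 $k\ge 0$: $p(s_r^{\gamma},s_{i+1}^\beta)=1-p_r$ and $p(c_r^{\gamma},s_{i+1}^\beta)=1-p_c$; for every $\gamma\in r^*$ (including $\varepsilon$): $p(s_r^\gamma,\bot)=1-p_r$, $p(c_r^\gamma,\bot)=1-p_c$; and $p(\bot,\bot)=1$. The block of $s_i^\alpha$ and of $c_i^\alpha$ is $\alpha$. The output states are the states $c_i^\beta$ (and $\sharp$). For a block $\alpha$ let $E_\alpha=\{s_j^\beta : 1\le j\le r,\ \beta\text{ a proper prefix of }\alpha\}\cup\{\bot\}$. For a state $s$ with block $\alpha$ and the chain $(X_n)$ started at $X_0=s$: $N(s)=\inf\{n\ge0 : X_n\in E_\alpha\}$ is the number of states visited before $E_\alpha$ is first reached, and $O(s)$ is the number of indices $0\le n< N(s)$ such that $X_n$ is an output state (the number of output states visited from $s$ before the block of $s$ is left upward). *)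

From HB Require Import structures.
From mathcomp Require Import all_boot all_order all_algebra.
From mathcomp Require Import all_classical all_reals all_analysis.
Set Implicit Arguments. Unset Strict Implicit. Unset Printing Implicit Defensive.
Import Order.TTheory GRing.Theory Num.Theory.
Import numFieldNormedType.Exports.
Local Open Scope classical_set_scope.
Local Open Scope ring_scope.

(* States of the Markov chain G.  [St i a] is s_i^a, [Ct i a] is c_i^a,
   blocks are words over nat (letters are meant to lie in 1..r). *)
Inductive state : Type :=
| St of nat & seq nat
| Ct of nat & seq nat
| Sharp
| Bot.

(* Target of the "leave block upward" transitions from s_r^g / c_r^g:
   g = b . i . r^k with i < r  ->  s_{i+1}^b ;  g in r^*  ->  Bot.
   [up_rev r l] works on l = rev g. *)
Fixpoint up_rev (r : nat) (l : seq nat) : state :=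
  match l with
  | [::] => Bot
  | x :: l' => if x == r then up_rev r l' else St x.+1 (rev l')
  end.

Definition up (r : nat) (g : seq nat) : state := up_rev r (rev g).

(* The transition
   probability p(x,y) is the sum of the probabilities of the entries with
   target y; unlisted transitions have probability 0. *)
Definition trans {R : nzRingType} (r : nat) (pc : R) (p : nat -> R) (x : state)
  : seq (state * R) :=
  match x with
  | Sharp => [:: (St 1 [::], pc); (Bot, 1 - pc)]
  | Bot => [:: (Bot, 1)]
  | St i a =>
      if (1 <= i <= r)%N then
        (Ct i a, p i) ::
        (if (i < r)%N then [:: (St i.+1 a, 1 - p i)] else [:: (up r a, 1 - p i)])
      else [::]
  | Ct i a =>
      if (1 <= i <= r)%N then
        (St 1 (rcons a i), pc) ::
        (if (i < r)%N then [:: (St i.+1 a, 1 - pc)] else [:: (up r a, 1 - pc)])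
      else [::]
  end.

Definition is_output (x : state) : bool :=
  match x with Ct _ _ | Sharp => true | _ => false end.

Definition inE (r : nat) (alpha : seq nat) (x : state) : bool :=
  match x with
  | St j b => (1 <= j <= r)%N && prefix b alpha && (size b < size alpha)%N
  | Bot => true
  | _ => false
  end.

(* probN n x = P_x( X_0, ..., X_n all outside E_alpha ) = P_x( N > n ). *)
Fixpoint probN {R : nzRingType} (r : nat) (pc : R) (p : nat -> R)
  (alpha : seq nat) (n : nat) (x : state) : R :=
  let av : R := (~~ inE r alpha x)%:R in
  match n with
  | 0 => av
  | n'.+1 => av * \sum_(yq <- trans r pc p x) yq.2 * probN r pc p alpha n' yq.1
  end.

(* probO n x = P_x( n < N and X_n is an output state ). *)
Fixpoint probO {R : nzRingType} (r : nat) (pc : R) (p : nat -> R)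
  (alpha : seq nat) (n : nat) (x : state) : R :=
  let av : R := (~~ inE r alpha x)%:R in
  match n with
  | 0 => av * (is_output x)%:R
  | n'.+1 => av * \sum_(yq <- trans r pc p x) yq.2 * probO r pc p alpha n' yq.1
  end.

(* E[N(x)] = sum_n P(N > n);  E[O(x)] = sum_n P(n < N, X_n output).
   The expectation equals v (finite) iff the partial sums converge to v. *)
Definition expN_is {R : realType} (r : nat) (pc : R) (p : nat -> R)
  (alpha : seq nat) (x : state) (v : R) : Prop :=
  (fun n : nat => \sum_(0 <= k < n) probN r pc p alpha k x) @ \oo --> v.

Definition expO_is {R : realType} (r : nat) (pc : R) (p : nat -> R)
  (alpha : seq nat) (x : state) (v : R) : Prop :=
  (fun n : nat => \sum_(0 <= k < n) probO r pc p alpha k x) @ \oo --> v.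

From Pilot Require Import Defs.
From HB Require Import structures.
From mathcomp Require Import all_boot all_order all_algebra.
From mathcomp Require Import all_classical all_reals all_analysis.
From mathcomp Require Import ring lra zify.
Import Order.TTheory GRing.Theory Num.Theory.
Import numFieldNormedType.Exports.
Local Open Scope classical_set_scope.
Local Open Scope ring_scope.

(* First-step analysis.  Charging cs to every s-state and cc to every output
   state, [value cs cc x] is the expected cost collected from x before E_alpha
   is hit: it solves V = cost + P V on the states reachable from s_1^alpha,
   where P is the transition operator killed on E_alpha, and it equals
   m = (r cs + psum cc) / (1 - pc psum) at s_1^alpha.  The partial sums of
   E[cost(X_n); n < N] converge to V because V minus the n-th partial sum is
   P^n V >= 0, while sum_n P^n V is bounded by the Lyapunov function
   h = V_N^2 + (1 + m_N)^2 V_N with V_N = value 1 1: the one-step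
   increments of V_N = 1 + P V_N are bounded by 1 + m_N, which makes
   h - P h >= V_N >= V. *)

Section SeriesOfIterates.
Variables (R : realType) (X : Type).
Variables (kernel : X -> seq (X * R)) (alive : X -> R).

Definition step (g : X -> R) (x : X) : R :=
  alive x * \sum_(yq <- kernel x) yq.2 * g yq.1.

Lemma step0 x : step (fun _ => 0) x = 0.
Proof. by rewrite /step big1 ?mulr0 // => yq _; rewrite mulr0. Qed.

Lemma step_sum (g : nat -> X -> R) n x :
  step (fun y => \sum_(0 <= k < n) g k y) x = \sum_(0 <= k < n) step (g k) x.
Proof.
rewrite /step -mulr_sumr exchange_big /=; congr (_ * _).
by apply: eq_bigr => yq _; rewrite mulr_sumr.
Qed.

Lemma stepB (g g' : X -> R) x :
  step (fun y => g y - g' y) x = step g x - step g' x.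
Proof.
rewrite /step -mulrBr -sumrB; congr (_ * _).
by apply: eq_bigr => yq _; rewrite mulrBr.
Qed.

Variable G : X -> Prop.
Hypothesis step_le : forall g g', (forall y, G y -> g y <= g' y) ->
  forall x, G x -> step g x <= step g' x.

Variables (rho V h : X -> R) (f : nat -> X -> R).
Hypothesis f0 : forall x, G x -> f 0%N x = rho x.
Hypothesis fS : forall n x, G x -> f n.+1 x = step (f n) x.
Hypothesis V_eq : forall x, G x -> V x = rho x + step V x.
Hypothesis V_ge0 : forall x, G x -> 0 <= V x.
Hypothesis h_ge0 : forall x, G x -> 0 <= h x.
Hypothesis h_lyapunov : forall x, G x -> V x + step h x <= h x.

Let remainder n x := V x - \sum_(0 <= k < n) f k x.

Let remainder0 x : remainder 0 x = V x.
Proof. by rewrite /remainder big_geq // subr0. Qed.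

Let remainderS n x : G x -> remainder n.+1 x = step (remainder n) x.
Proof.
move=> Gx; rewrite /remainder big_nat_recl // f0 // stepB {1}V_eq //.
under eq_bigr => k _ do rewrite fS //.
rewrite -step_sum; lra.
Qed.

Let remainder_ge0 n x : G x -> 0 <= remainder n x.
Proof.
elim: n x => [|n IH] x Gx; first by rewrite remainder0 V_ge0.
by rewrite remainderS // -(step0 x) step_le.
Qed.

Let sum_remainder_le n x : G x -> \sum_(0 <= k < n) remainder k x <= h x.
Proof.
elim: n x => [|n IH] x Gx; first by rewrite big_geq // h_ge0.
rewrite big_nat_recl // remainder0.
under eq_bigr => k _ do rewrite remainderS //.
rewrite -step_sum; apply: le_trans _ (h_lyapunov x Gx).
by rewrite lerD2l step_le.
Qed.

Theorem iterate_series_cvg x : G x ->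
  (fun n => \sum_(0 <= k < n) f k x) @ \oo --> V x.
Proof.
move=> Gx; have remainder_cvg0 : remainder^~ x @ \oo --> 0.
  apply/cvg_series_cvg_0/nondecreasing_is_cvgn.
    by apply: nondecreasing_series => k _ _; exact: remainder_ge0.
  by exists (h x) => _ [n _ <-]; exact: sum_remainder_le.
have -> : (fun n => \sum_(0 <= k < n) f k x) = (fun n => V x - remainder n x).
  by apply/funext => n; rewrite /remainder subKr.
by rewrite -[X in _ --> X]subr0; apply: cvgB => //; exact: cvg_cst.
Qed.

End SeriesOfIterates.

Arguments step {R X} kernel alive g x.
Arguments iterate_series_cvg {R X kernel alive G} step_le {rho V h f}.

Definition sqr_lyap {R : pzSemiRingType} (K v : R) : R := v ^+ 2 + K ^+ 2 * v.

Lemma sqr_lyap_super (R : realFieldType) (q v v1 v2 K : R) :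
  0 <= q <= 1 -> 0 <= v1 -> 0 <= v2 -> `|v1 - v2| <= K ->
  v = 1 + (q * v1 + (1 - q) * v2) ->
  v + (q * sqr_lyap K v1 + (1 - q) * sqr_lyap K v2) <= sqr_lyap K v.
Proof.
move=> /andP[q0 q1] v1_ge0 v2_ge0 gap_le ->; rewrite /sqr_lyap.
have K_ge0 := le_trans (normr_ge0 _) gap_le.
move: gap_le; rewrite ler_norml => /andP[gapl gapr].
(* q v1^2 + (1-q) v2^2 exceeds (q v1 + (1-q) v2)^2 by q (1-q) (v1-v2)^2 <= K^2,
   which the K^2 v term absorbs. *)
have var_le : q * (1 - q) * (v1 - v2) ^+ 2 <= K ^+ 2.
  have sq_le : (v1 - v2) ^+ 2 <= K ^+ 2 by nra.
  have qq : 0 <= q * (1 - q) <= 1 by apply/andP; split; nra.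
  nra.
nra.
Qed.

Definition letter (r a : nat) : bool := (1 <= a <= r)%N.

Lemma up_rcons r b x : up r (rcons b x) = if x == r then up r b else St x.+1 b.
Proof. by rewrite /up rev_rcons /= revK. Qed.

Lemma inE_rcons r b x y : Defs.inE r b y -> Defs.inE r (rcons b x) y.
Proof.
case: y => //= j c /andP[/andP[-> pre] lt].
by rewrite (prefix_trans pre (prefix_rcons b x)) size_rcons ltnS ltnW.
Qed.

Lemma up_inE r b : all (letter r) b -> Defs.inE r b (up r b).
Proof.
elim/last_ind: b => [|b x IH] //.
rewrite all_rcons up_rcons => /andP[x_letter b_letters].
case: eqP => [_|x_neq_r]; first exact/inE_rcons/IH.
rewrite /= prefix_rcons size_rcons ltnSn !andbT.
by move: x_letter x_neq_r; rewrite /letter; lia.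
Qed.

Section Chain.
Variables (R : realType) (r : nat) (pc : R) (p : nat -> R) (alpha : seq nat).
Hypothesis pc01 : 0 <= pc <= 1.
Hypothesis p01 : forall i, letter r i -> 0 <= p i <= 1.
Hypothesis alpha_letters : all (letter r) alpha.

Local Notation in_exit := (Defs.inE r alpha).
Local Notation trans := (trans r pc p).

Definition alive (x : state) : R := (~~ in_exit x)%:R.

Local Notation step := (step trans alive).

Lemma step_exit g x : in_exit x -> step g x = 0.
Proof. by rewrite /step /alive => ->; rewrite mul0r. Qed.

Definition admissible (x : state) : Prop :=
  in_exit x \/ exists i g, [/\ letter r i, all (letter r) g &
    x = St i (alpha ++ g) \/ x = Ct i (alpha ++ g)].

Definition next (i : nat) (b : seq nat) : state :=
  if (i < r)%N then St i.+1 b else up r b.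

Lemma St_cat_notin_exit i g : in_exit (St i (alpha ++ g)) = false.
Proof.
by rewrite /= size_cat; apply/negbTE; rewrite negb_and -leqNgt leq_addr orbT.
Qed.

Lemma admissible_St i g :
  letter r i -> all (letter r) g -> admissible (St i (alpha ++ g)).
Proof. by right; exists i, g; split => //; left. Qed.

Lemma admissible_Ct i g :
  letter r i -> all (letter r) g -> admissible (Ct i (alpha ++ g)).
Proof. by right; exists i, g; split => //; right. Qed.

Definition psum : R := \sum_(1 <= i < r.+1) p i.
Hypothesis pc_psum_lt1 : pc * psum < 1.

Lemma psum_ge0 : 0 <= psum.
Proof.
rewrite /psum big_nat_cond; apply: sumr_ge0 => i /andP[i_letter _].
by case/andP: (p01 _ i_letter).
Qed.

Lemma subr_pc_psum_gt0 : 0 < 1 - pc * psum.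
Proof. by rewrite subr_gt0. Qed.

(* O counts with (cs, cc) = (0, 1), N with (1, 1). *)
Definition cost (cs cc : R) (x : state) : R := if is_output x then cc else cs.

Section Costs.
Variables cs cc : R.

(* The fixed point of m = r cs + psum (cc + pc m): positions 1..r of a block
   each cost cs, and position j enters c_j (cost cc) with probability p j,
   which in turn opens a child block with probability pc. *)
Definition mean : R := (r%:R * cs + psum * cc) / (1 - pc * psum).

Definition rest (i : nat) : R :=
  \sum_(i <= j < r.+1) (cs + p j * (cc + pc * mean)).

(* Cost of the positions still to be visited in the blocks between alpha and
   alpha ++ g once the block alpha ++ g is left. *)
Definition tail (g : seq nat) : R := \sum_(j <- g) rest j.+1.

Definition value (x : state) : R :=
  if in_exit x then 0 else
  match x with
  | St i b => rest i + tail (drop (size alpha) b)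
  | Ct i b => cc + pc * mean + rest i.+1 + tail (drop (size alpha) b)
  | _ => 0
  end.

Lemma rest_recl {i} :
  letter r i -> rest i = cs + p i * (cc + pc * mean) + rest i.+1.
Proof. by move=> /andP[_ i_le_r]; rewrite /rest big_ltn // ltnS. Qed.

Lemma rest_r1 : rest r.+1 = 0.
Proof. by rewrite /rest big_geq. Qed.

Lemma rest1 : rest 1 = mean.
Proof.
rewrite /rest big_split /= sumr_const_nat subn1 -mulr_suml -/psum /mean.
by field; rewrite lt0r_neq0 // subr_pc_psum_gt0.
Qed.

Lemma tail_rcons g j : tail (rcons g j) = tail g + rest j.+1.
Proof. by rewrite /tail big_rcons. Qed.

Lemma value_St i g : value (St i (alpha ++ g)) = rest i + tail g.
Proof. by rewrite /value St_cat_notin_exit drop_size_cat. Qed.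

Lemma value_Ct i g :
  value (Ct i (alpha ++ g)) = cc + pc * mean + rest i.+1 + tail g.
Proof. by rewrite /value /= drop_size_cat. Qed.

Lemma up_spec g : all (letter r) g ->
  admissible (up r (alpha ++ g)) /\ value (up r (alpha ++ g)) = tail g.
Proof.
elim/last_ind: g => [|g x IH].
  have exit_up := up_inE _ _ alpha_letters.
  by rewrite cats0 /value exit_up /tail big_nil; split => //; left.
rewrite all_rcons -rcons_cat up_rcons tail_rcons => /andP[x_letter g_letters].
case: eqP => [->|x_neq_r]; first by rewrite rest_r1 addr0; exact: IH.
have x1_letter : letter r x.+1 by move: x_letter x_neq_r; rewrite /letter; lia.
by rewrite value_St addrC; split => //; exact: admissible_St.
Qed.

Lemma next_spec {i g} : letter r i -> all (letter r) g ->
  admissible (next i (alpha ++ g)) /\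
  value (next i (alpha ++ g)) = rest i.+1 + tail g.
Proof.
move=> i_letter g_letters; rewrite /next; case: ltnP => [i_lt_r|r_le_i].
  rewrite value_St; split => //.
  by apply: admissible_St => //; rewrite /letter; lia.
have -> : i = r by move: i_letter r_le_i; rewrite /letter; lia.
by rewrite rest_r1 add0r; exact: up_spec.
Qed.

End Costs.

Lemma mean_ge0 {cs cc} : 0 <= cs -> 0 <= cc -> 0 <= mean cs cc.
Proof.
move=> cs_ge0 cc_ge0; rewrite divr_ge0 ?(ltW subr_pc_psum_gt0) //.
by rewrite addr_ge0 ?mulr_ge0 ?psum_ge0.
Qed.

Lemma value0 x : value 0 0 x = 0.
Proof.
have mean0 : mean 0 0 = 0 by rewrite /mean !mulr0 addr0 mul0r.
have rest0 i : rest 0 0 i = 0.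
  by rewrite /rest big1 // => j _; rewrite mean0 mulr0 !add0r mulr0.
have tail0 g : tail 0 0 g = 0 by rewrite /tail big1.
rewrite /value; case: ifP => // _.
by case: x => // *; rewrite ?mean0 !rest0 tail0; lra.
Qed.

Lemma value_le cs cc cs' cc' x : cs <= cs' -> cc <= cc' -> admissible x ->
  value cs cc x <= value cs' cc' x.
Proof.
move=> cs_le cc_le; have /andP[pc_ge0 _] := pc01.
have mean_le : mean cs cc <= mean cs' cc'.
  rewrite ler_pM2r ?invr_gt0 ?subr_pc_psum_gt0 // lerD ?ler_wpM2l ?psum_ge0 //.
have rest_le i : (1 <= i)%N -> rest cs cc i <= rest cs' cc' i.
  move=> i_ge1; rewrite /rest big_nat_cond [leRHS]big_nat_cond.
  apply: ler_sum => j /andP[/andP[i_le_j j_le_r] _].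
  have /andP[pj_ge0 _] : 0 <= p j <= 1 by apply: p01; rewrite /letter; lia.
  by rewrite lerD // ler_wpM2l // lerD // ler_wpM2l.
have tail_le g : tail cs cc g <= tail cs' cc' g.
  by apply: ler_sum => j _; exact: rest_le.
case=> [exit_x|[i [g [/andP[i_ge1 _] _ [->|->]]]]].
- by rewrite /value exit_x.
- by rewrite !value_St lerD ?rest_le.
- by rewrite !value_Ct !lerD ?rest_le // ler_wpM2l.
Qed.

Lemma value_ge0 {cs cc x} :
  0 <= cs -> 0 <= cc -> admissible x -> 0 <= value cs cc x.
Proof. by move=> cs_ge0 cc_ge0 adm_x; rewrite -(value0 x) value_le. Qed.

Definition branches (x y1 y2 : state) (q : R) : Prop :=
  [/\ forall g, step g x = q * g y1 + (1 - q) * g y2, 0 <= q <= 1,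
      admissible y1, admissible y2 &
      forall cs cc, 0 <= cs -> 0 <= cc ->
        value cs cc x =
          cost cs cc x + (q * value cs cc y1 + (1 - q) * value cs cc y2) /\
        `|value cs cc y1 - value cs cc y2| <= cc + mean cs cc].

Lemma step_two_point g x y1 y2 q : ~~ in_exit x ->
  trans x = [:: (y1, q); (y2, 1 - q)] -> step g x = q * g y1 + (1 - q) * g y2.
Proof.
by rewrite /step /alive => -> ->; rewrite !big_cons big_nil addr0 mul1r.
Qed.

Lemma branches_St i g : letter r i -> all (letter r) g ->
  branches (St i (alpha ++ g)) (Ct i (alpha ++ g)) (next i (alpha ++ g)) (p i).
Proof.
move=> i_letter g_letters.
have [adm_next _] := next_spec 0 0 i_letter g_letters.
split; [|exact: p01|exact: admissible_Ct|exact: adm_next|].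
  move=> h; apply: step_two_point; first by rewrite St_cat_notin_exit.
  by move: i_letter; rewrite /letter /= /next => ->; case: ltnP.
move=> cs cc cs_ge0 cc_ge0; have [_ ->] := next_spec cs cc i_letter g_letters.
rewrite value_St value_Ct (rest_recl _ _ i_letter) /cost /=; split; first ring.
have /andP[pc_ge0 pc_le1] := pc01; have m_ge0 := mean_ge0 cs_ge0 cc_ge0.
rewrite -[X in X - _]addrA addrK ger0_norm; first by rewrite lerD2l ler_piMl.
by rewrite addr_ge0 // mulr_ge0.
Qed.

Lemma branches_Ct i g : letter r i -> all (letter r) g ->
  branches (Ct i (alpha ++ g))
    (St 1 (alpha ++ rcons g i)) (next i (alpha ++ g)) pc.
Proof.
move=> i_letter g_letters.
have [adm_next _] := next_spec 0 0 i_letter g_letters.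
have gi_letters : all (letter r) (rcons g i) by rewrite all_rcons i_letter.
have one_letter : letter r 1 by move: i_letter; rewrite /letter; lia.
split; [|exact: pc01|exact: admissible_St|exact: adm_next|].
  move=> h; apply: step_two_point => //.
  by move: i_letter; rewrite /letter /= /next rcons_cat => ->; case: ltnP.
move=> cs cc cs_ge0 cc_ge0; have [_ ->] := next_spec cs cc i_letter g_letters.
rewrite value_Ct value_St rest1 tail_rcons /cost /=; split; first ring.
rewrite [_ + rest _ _ _]addrC addrK ger0_norm ?mean_ge0 //.
by rewrite lerDr.
Qed.

Lemma admissible_branches {x} :
  admissible x -> ~~ in_exit x -> exists y1 y2 q, branches x y1 y2 q.
Proof.
case=> [-> //|[i [g [i_letter g_letters [->|->]]]]] _.
  by eexists _, _, _; exact: branches_St.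
by eexists _, _, _; exact: branches_Ct.
Qed.

Lemma step_le_admissible g g' : (forall y, admissible y -> g y <= g' y) ->
  forall x, admissible x -> step g x <= step g' x.
Proof.
move=> g_le x adm_x; have [exit_x|alive_x] := boolP (in_exit x).
  by rewrite !step_exit.
have [y1 [y2 [q [step_x /andP[q_ge0 q_le1] adm1 adm2 _]]]] :=
  admissible_branches adm_x alive_x.
by rewrite !step_x lerD // ler_wpM2l ?subr_ge0 // g_le.
Qed.

Lemma value_fixpoint cs cc x : 0 <= cs -> 0 <= cc -> admissible x ->
  value cs cc x = alive x * cost cs cc x + step (value cs cc) x.
Proof.
move=> cs_ge0 cc_ge0 adm_x; have [exit_x|alive_x] := boolP (in_exit x).
  by rewrite step_exit // /value /alive exit_x mul0r addr0.
have [y1 [y2 [q [step_x _ _ _ /(_ cs cc cs_ge0 cc_ge0) [-> _]]]]] :=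
  admissible_branches adm_x alive_x.
by rewrite step_x /alive alive_x mul1r.
Qed.

Definition lyap (x : state) : R := sqr_lyap (1 + mean 1 1) (value 1 1 x).

Lemma lyap_ge0 x : admissible x -> 0 <= lyap x.
Proof.
move=> adm_x; rewrite /lyap /sqr_lyap addr_ge0 ?sqr_ge0 // mulr_ge0 ?sqr_ge0 //.
exact: value_ge0 ler01 ler01 adm_x.
Qed.

Lemma lyap_super {x} : admissible x -> value 1 1 x + step lyap x <= lyap x.
Proof.
move=> adm_x; have [exit_x|alive_x] := boolP (in_exit x).
  by rewrite step_exit // /lyap /sqr_lyap /value exit_x; lra.
have [y1 [y2 [q [step_x q01 adm1 adm2 /(_ 1 1 ler01 ler01) [value_x gap]]]]] :=
  admissible_branches adm_x alive_x.
rewrite step_x; apply: sqr_lyap_super => //; rewrite ?value_ge0 //.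
by rewrite value_x /cost; case: is_output.
Qed.

Lemma expected_cost_cvg cs cc (f : nat -> state -> R) :
  (1 <= r)%N -> 0 <= cs <= 1 -> 0 <= cc <= 1 ->
  (forall x, f 0%N x = alive x * cost cs cc x) ->
  (forall n x, f n.+1 x = step (f n) x) ->
  (fun n => \sum_(0 <= k < n) f k (St 1 alpha)) @ \oo --> mean cs cc.
Proof.
move=> r_ge1 /andP[cs_ge0 cs_le1] /andP[cc_ge0 cc_le1] f0 fS.
have adm_start : admissible (St 1 alpha).
  by rewrite -[alpha]cats0; apply: admissible_St.
have <- : value cs cc (St 1 alpha) = mean cs cc.
  by rewrite -[alpha]cats0 value_St rest1 /tail big_nil addr0.
apply: (iterate_series_cvg step_le_admissible (V := value cs cc) (h := lyap))
  => //.
- by move=> x adm_x; rewrite f0; exact: value_fixpoint.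
- by move=> x; exact: value_ge0.
- exact: lyap_ge0.
- move=> x adm_x; apply: le_trans _ (lyap_super adm_x); rewrite lerD2r.
  exact: value_le.
Qed.

End Chain.

Lemma sum_le_bigmax {R : realDomainType} (m n : nat) (F : nat -> R) :
  \sum_(m <= i < n) F i <= (n - m)%:R * \big[Num.max/0]_(m <= i < n) F i.
Proof.
rewrite mulr_natl -sumr_const_nat; apply: ler_sum_nat => i i_in.
by apply: le_bigmax_seq; rewrite ?mem_index_iota.
Qed.

Theorem theorem3p4 (R : realType) (r : nat) (pc : R) (p : nat -> R)
  (alpha : seq nat) :
  (1 <= r)%N ->
  0 <= pc <= 1 ->
  (forall i : nat, (1 <= i <= r)%N -> 0 <= p i <= 1) ->
  pc < 1 ->
  pc * r%:R * \big[Num.max/0]_(1 <= i < r.+1) p i < 1 ->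
  all (fun a => (1 <= a <= r)%N) alpha ->
  expO_is r pc p alpha (St 1 alpha)
    ((\sum_(1 <= i < r.+1) p i) / (1 - pc * \sum_(1 <= i < r.+1) p i)) /\
  expN_is r pc p alpha (St 1 alpha)
    ((r%:R + \sum_(1 <= i < r.+1) p i) / (1 - pc * \sum_(1 <= i < r.+1) p i)).
Proof.
move=> r_ge1 pc01 p01 _ pc_max alpha_letters.
have pc_psum : pc * psum R r p < 1.
  have /andP[pc_ge0 _] := pc01.
  apply: le_lt_trans pc_max; rewrite -mulrA ler_wpM2l //.
  by have := sum_le_bigmax 1 r.+1 p; rewrite subn1.
have cvg :=
  @expected_cost_cvg R r pc p alpha pc01 p01 alpha_letters pc_psum _ _ _ r_ge1.
split.
- have := cvg 0 1 (probO r pc p alpha); rewrite /mean mulr0 add0r mulr1.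
  apply; rewrite ?lexx ?ler01 // => x.
  by rewrite /= /cost; case: is_output.
- have := cvg 1 1 (probN r pc p alpha); rewrite /mean !mulr1.
  apply; rewrite ?lexx ?ler01 // => x.
  by rewrite /= /cost if_same mulr1.
Qed.
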